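(* If $G$ is a graph with no isolated vertices, then $\gamma_{\rm gr}^t(G) \ge 2\nu_{ss}(G)$.
   Context: All graphs are finite, simple, without isolated vertices. For a matching $M$ of $G$, let $V(M)$ be the set of vertices incident to edges of $M$; a vertex of $V(M)$ is strong if it has degree $1$ in the induced subgraph $G[V(M)]$. $M$ is a semistrong matching if every edge of $M$ has at least one strong endpoint; $\nu_{ss}(G)$ is the maximum number of edges in a semistrong matching of $G$. $N(v)$ denotes the open neighborhood of $v$. A sequence $S=(v_1,\ldots,v_k)$ of distinct vertices is a legal sequence if $N(v_i)\setminus \bigcup_{j=1}^{i-1} N(v_j)\neq\emptyset$ for every $i\in\{2,\ldots,k\}$, and a total dominating sequence if moreover $\{v_1,\ldots,v_k\}$ is a total dominating set of $G$. $\gamma_{\rm gr}^t(G)$ is the maximum length of a total dominating sequence of $G$. *)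

From mathcomp Require Import all_boot.
Set Implicit Arguments. Unset Strict Implicit. Unset Printing Implicit Defensive.

Definition simple_graph (T : finType) (e : rel T) : Prop :=
  symmetric e /\ irreflexive e.

Definition no_isolated (T : finType) (e : rel T) : Prop :=
  forall v : T, exists u : T, e v u.

Section G.
Variables (T : finType) (e : rel T).

Definition N (v : T) : {set T} := [set u | e v u].

(* A matching is a sequence of edges (x, y) (each unordered edge listed once,
   oriented arbitrarily) whose endpoints are pairwise distinct. *)
Definition VM (M : seq (T * T)) : seq T := flatten [seq [:: p.1; p.2] | p <- M].

Definition is_matching (M : seq (T * T)) : bool :=
  all (fun p => e p.1 p.2) M && uniq (VM M).

Definition degM (M : seq (T * T)) (v : T) : nat :=
  #|[set u | (u \in VM M) && e v u]|.

Definition strong (M : seq (T * T)) (v : T) : bool := (v \in VM M) && (degM M v == 1).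

Definition semistrong (M : seq (T * T)) : bool :=
  is_matching M && all (fun p => strong M p.1 || strong M p.2) M.

Definition nu_ss : nat :=
  \max_(k < #|T|.+1 | [exists M : k.-tuple (T * T), semistrong M]) k.

Definition legal (s : seq T) : bool :=
  uniq s &&
  [forall x0 : T, forall i : 'I_(size s),
     (0 < i) ==>
     (N (nth x0 s i) :\: \bigcup_(j < i) N (nth x0 s j) != set0)].
  (* x0 is only a default for nth; all indices used are < size s *)

Definition total_dominating (S : seq T) : bool :=
  [forall v : T, exists u : T, (u \in S) && e v u].

Definition tds (s : seq T) : bool := legal s && total_dominating s.

Definition gamma_gr_t : nat :=
  \max_(n < #|T|.+1 | [exists s : n.-tuple T, tds s]) n.

End G.

From mathcomp Require Import all_boot.
From mathcomp Require Import zify.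
Set Implicit Arguments. Unset Strict Implicit. Unset Printing Implicit Defensive.

(* Let M be a semistrong matching with edges x_i y_i, x_i a strong vertex.
   Since the only neighbour of x_i in V(M) is y_i, the sequence
   x_1, ..., x_k, y_1, ..., y_k is legal: x_i is footprinted by y_i, and y_i
   by x_i.  Without isolated vertices every legal sequence that does not
   dominate some vertex v can be extended by a neighbour of v, so it extends
   to a total dominating sequence, of length at least 2k. *)

Section LegalSequences.
Variables (T : finType) (e : rel T).

Lemma nth_notin_take (U : eqType) (x0 : U) (s : seq U) i :
  uniq s -> i < size s -> nth x0 s i \notin take i s.
Proof.
move=> Us lt_i_s; have := take_uniq i.+1 Us.
by rewrite (take_nth x0 lt_i_s) rcons_uniq => /andP[].
Qed.

Lemma legalP (s : seq T) :
  legal e s <->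
  uniq s /\ forall x0 i, 0 < i < size s ->
    exists2 w, e (nth x0 s i) w & all (fun v => ~~ e v w) (take i s).
Proof.
have take_nthP x0 i w : i < size s ->
    all (fun v => ~~ e v w) (take i s) = (w \notin \bigcup_(j < i) N e (nth x0 s j)).
  move=> lt_i_s; rewrite -(map_nth_iota0 x0 (ltnW lt_i_s)) all_map.
  apply/allP/negP => [nadj /bigcupP[j _] | nadj v].
    by rewrite inE; apply/negP; apply: nadj; rewrite (mem_iota 0 i j) ltn_ord.
  rewrite mem_iota add0n => /andP[_ lt_v_i] /=; apply/negP => adj.
  by apply: nadj; apply/bigcupP; exists (Ordinal lt_v_i); rewrite ?inE.
split => [/andP[Us /forallP legal_s] | [Us footprint]].
  split=> // x0 i /andP[i_gt0 lt_i_s].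
  have /forall_inP /(_ (Ordinal lt_i_s) i_gt0) /set0Pn[w] := legal_s x0.
  by rewrite !inE => /andP[nw ew]; exists w; rewrite // (take_nthP x0).
apply/andP; split=> //; apply/forallP => x0; apply/forall_inP => i i_gt0.
have [w ew nadj] := footprint x0 i (introT andP (conj i_gt0 (ltn_ord i))).
by apply/set0Pn; exists w; rewrite !inE ew andbT -take_nthP.
Qed.

Lemma legal_rcons (s : seq T) u w :
  legal e s -> u \notin s -> e u w -> all (fun v => ~~ e v w) s ->
  legal e (rcons s u).
Proof.
move=> /legalP[Us footprint] us euw nadj; apply/legalP.
split=> [|x0 i]; first by rewrite rcons_uniq us Us.
rewrite size_rcons ltnS => /andP[i_gt0]; rewrite leq_eqVlt => /orP[/eqP-> | lt_i_s].
  by rewrite nth_rcons ltnn eqxx -cats1 take_size_cat //; exists w.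
rewrite nth_rcons lt_i_s -cats1 (takel_cat _ (ltnW lt_i_s)).
by apply: footprint; rewrite i_gt0.
Qed.

Lemma legal_size_le (s : seq T) : legal e s -> size s <= #|T|.
Proof. by case/andP => /card_uniqP <- _; apply: max_card. Qed.

Hypothesis e_sym : symmetric e.
Hypothesis e_no_isolated : no_isolated e.

Lemma legal_rcons_undominated (s : seq T) :
  legal e s -> ~~ total_dominating e s -> exists u, legal e (rcons s u).
Proof.
move=> legal_s /forallPn[v /existsPn undom].
have [u evu] := e_no_isolated v.
have us : u \notin s by apply/negP => us; have := undom u; rewrite us evu.
exists u; apply: (legal_rcons legal_s us (w := v)); first by rewrite e_sym.
by apply/allP => x xs; apply/negP => exv; have := undom x; rewrite xs e_sym exv.
Qed.

Lemma legal_extend_tds (s : seq T) :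
  legal e s -> exists2 s', tds e s' & size s <= size s'.
Proof.
have [n] := ubnP (#|T| - size s); elim: n s => // n IH s lt_n legal_s.
case tds_s: (total_dominating e s); first by exists s; rewrite // /tds legal_s.
have [u legal_su] := legal_rcons_undominated legal_s (negbT tds_s).
have lt_su : #|T| - size (rcons s u) < n.
  by have := legal_size_le legal_su; rewrite size_rcons; lia.
have [s' tds_s' le_s'] := IH (rcons s u) lt_su legal_su.
by exists s' => //; apply: leq_trans le_s'; rewrite size_rcons.
Qed.

Lemma tds_size_le_gamma (s : seq T) : tds e s -> size s <= gamma_gr_t e.
Proof.
move=> tds_s; have lt_s : size s < #|T|.+1.
  by rewrite ltnS; apply: legal_size_le; case/andP: tds_s.
by apply: (leq_bigmax_cond (Ordinal lt_s)); apply/existsP; exists (in_tuple s).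
Qed.

End LegalSequences.

Section SemistrongMatching.
Variables (T : finType) (e : rel T).

Lemma strong_adj_uniq (M : seq (T * T)) x u v :
  strong e M x -> u \in VM M -> v \in VM M -> e x u -> e x v -> u = v.
Proof.
case/andP => _ /cards1P[z Nx] uM vM exu exv.
have : u \in [set y | (y \in VM M) & e x y] by rewrite inE uM exu.
have : v \in [set y | (y \in VM M) & e x y] by rewrite inE vM exv.
by rewrite Nx !inE => /eqP-> /eqP->.
Qed.

Lemma perm_VM_ends (f g : T * T -> T) (M : seq (T * T)) :
  (forall p, perm_eq [:: f p; g p] [:: p.1; p.2]) ->
  perm_eq (map f M ++ map g M) (VM M).
Proof.
move=> ends; elim: M => //= p M IH.
rewrite -cat1s perm_catCA -[[:: f p] ++ _]/([:: f p; g p] ++ map g M) perm_catCA.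
exact: perm_cat (ends p) IH.
Qed.

Variable M : seq (T * T).
Hypothesis e_sym : symmetric e.
Hypothesis M_semistrong : semistrong e M.

Definition strong_end (p : T * T) := if strong e M p.1 then p.1 else p.2.
Definition other_end (p : T * T) := if strong e M p.1 then p.2 else p.1.

Local Notation xs := (map strong_end M).
Local Notation ys := (map other_end M).

Lemma perm_ends_VM : perm_eq (xs ++ ys) (VM M).
Proof.
apply: perm_VM_ends => p; rewrite /strong_end /other_end.
by case: ifP => _; rewrite // -[[:: p.2; p.1]]/([:: p.2] ++ [:: p.1]) perm_catC.
Qed.

Lemma uniq_ends : uniq (xs ++ ys).
Proof. by case/andP: M_semistrong => /andP[_]; rewrite (perm_uniq perm_ends_VM). Qed.

Lemma mem_VM_ends v : v \in xs ++ ys -> v \in VM M.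
Proof. by rewrite (perm_mem perm_ends_VM). Qed.

Lemma strong_end_strong p : p \in M -> strong e M (strong_end p).
Proof.
move=> pM; case/andP: M_semistrong => _ /allP /(_ p pM).
by rewrite /strong_end; case: ifP.
Qed.

Lemma edge_ends p : p \in M -> e (strong_end p) (other_end p).
Proof.
move=> pM; case/andP: M_semistrong => /andP[/allP /(_ p pM) ep _] _.
by rewrite /strong_end /other_end; case: ifP; rewrite // e_sym.
Qed.

Lemma strong_end_adj_other p q :
  p \in M -> q \in M -> e (strong_end p) (other_end q) -> other_end q = other_end p.
Proof.
move=> pM qM adj.
by apply: (strong_adj_uniq (strong_end_strong pM) _ _ adj (edge_ends pM));
  apply: mem_VM_ends; rewrite mem_cat map_f ?orbT.
Qed.

Lemma strong_ends_nonadj p q :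
  p \in M -> q \in M -> ~~ e (strong_end p) (strong_end q).
Proof.
move=> pM qM; apply/negP => adj.
have eq_q : strong_end q = other_end p.
  by apply: (strong_adj_uniq (strong_end_strong pM) _ _ adj (edge_ends pM));
    apply: mem_VM_ends; rewrite mem_cat map_f ?orbT.
move: uniq_ends; rewrite cat_uniq => /and3P[_ /hasPn /(_ (other_end p)) + _].
by rewrite map_f // -eq_q map_f // => /(_ isT).
Qed.

Lemma other_end_take_neq p0 i q :
  i < size M -> q \in take i M -> other_end q != other_end (nth p0 M i).
Proof.
move=> lt_i_M qM; apply: contraTneq (map_f other_end qM) => ->.
rewrite map_take -(nth_map p0 (other_end p0)) //.
apply: nth_notin_take; last by rewrite size_map.
by move: uniq_ends; rewrite cat_uniq => /and3P[].
Qed.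

Lemma semistrong_legal_ends : legal e (xs ++ ys).
Proof.
apply/legalP; split=> [|x0 i]; first exact: uniq_ends.
pose p0 := (x0, x0); rewrite size_cat !size_map => /andP[_ lt_i].
rewrite nth_cat take_cat size_map; case: ltnP => [lt_i_M | le_M_i].
  exists (other_end (nth p0 M i)); first by rewrite (nth_map p0) // edge_ends ?mem_nth.
  apply/allP => v; rewrite -map_take => /mapP[q qM ->] /=; apply/negP.
  move/(strong_end_adj_other (mem_take qM) (mem_nth p0 lt_i_M)) => eq_q.
  by have := other_end_take_neq p0 lt_i_M qM; rewrite eq_q eqxx.
have lt_i' : i - size M < size M by lia.
exists (strong_end (nth p0 M (i - size M))).
  by rewrite (nth_map p0) // e_sym edge_ends ?mem_nth.
apply/allP => v; rewrite mem_cat -map_take => /orP[/mapP[q qM ->] | /mapP[q qM ->]] /=.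
  by apply: strong_ends_nonadj; rewrite ?mem_nth.
rewrite e_sym; apply/negP.
move/(strong_end_adj_other (mem_nth p0 lt_i') (mem_take qM)) => eq_q.
by have := other_end_take_neq p0 lt_i' qM; rewrite eq_q eqxx.
Qed.

End SemistrongMatching.

Theorem mainTheorem6 (T : finType) (e : rel T) :
  simple_graph e -> no_isolated e -> 2 * nu_ss e <= gamma_gr_t e.
Proof.
move=> [e_sym _] e_no_isolated.
apply: (big_ind (fun k => 2 * k <= gamma_gr_t e)) => [|k l|k /existsP[M ssM]].
- by [].
- by lia.
have [s tds_s le_s] := legal_extend_tds e_sym e_no_isolated
                         (semistrong_legal_ends e_sym ssM).
apply: leq_trans (leq_trans le_s (tds_size_le_gamma tds_s)).
by rewrite size_cat !size_map size_tuple mul2n addnn.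
Qed.
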